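(* For conjunctive guarded systems of type $(A,B)$ and every LTL formula without the next operator $h(A,B_1)$: for all $n\ge2$, if some unconditionally fair initializing run of $(A,B)^{(1,n)}$ satisfies $h(A,B_1)$, then some unconditionally fair initializing run of $(A,B)^{(1,n+1)}$ satisfies $h(A,B_1)$.
   Context: A process template is $U=(Q_U,\mathit{init}_U,\Sigma_U,\delta_U)$ with finite states $Q_U$, initial state $\mathit{init}_U$, finite input alphabet $\Sigma_U$ and guarded transitions $\delta_U\subseteq Q_U\times\Sigma_U\times 2^{Q_A\cup Q_B}\times Q_U$; templates $A,B$ have disjoint state sets and disjoint alphabets. The system $(A,B)^{(1,n)}$ consists of one copy of $A$ and $n$ copies $B_1,\dots,B_n$ of $B$; a global state $s$ gives each process a local state, a global input $e$ gives each process an input letter, and initially all processes are in their initial states. In a conjunctive system a guard $g$ is satisfied for process $p$ in $s$ iff every process $p'\ne p$ has $s(p')\in g$, and $\mathit{init}_A,\mathit{init}_B$ belong to every guard. A local transition $(q,\sigma,g,q')$ of $p$ is enabled for $(s,e)$ if $s(p)=q$, $e(p)=\sigma$ and $g$ is satisfied for $p$ in $s$; a global step changes the state of exactly one process along an enabled transition. A path is a sequence of configurations $(s_1,e_1,p_1),(s_2,e_2,p_2),\dots$ where $p_t$ makes the step from $s_t$ to $s_{t+1}$ under $e_t$, a configuration $(s,e,\bot)$ occurs (as the last one) exactly when all processes are disabled, and $e_{t+1}(p)=e_t(p)$ for every process $p$ not moving at moment $t$. A run is a maximal path from the initial state. A run is unconditionally fair if it is infinite and every process moves infinitely often; it is initializing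 if every process that moves infinitely often visits its template's initial state infinitely often. $h(A,B_1)$ is an LTL formula without next operator over atomic propositions from $Q_A\cup\Sigma_A$ and $(Q_B\cup\Sigma_B)\times\{1\}$, interpreted on the local states and inputs of $A$ and $B_1$ along the run. *)

From mathcomp Require Import all_boot.
Set Implicit Arguments. Unset Strict Implicit. Unset Printing Implicit Defensive.

(* State sets and alphabets are finite
   types; disjointness of Q_A/Q_B and Sigma_A/Sigma_B is built in since they
   are distinct types and guards live in {set (QA + QB)} (disjoint union). *)
Record templates := Templates {
  QA : finType; QB : finType; SA : finType; SB : finType;
  initA : QA; initB : QB;
  deltaA : {set (QA * SA * {set (QA + QB)} * QA)};
  deltaB : {set (QB * SB * {set (QA + QB)} * QB)} }.

Section Sys.
Variable T : templates.
Local Notation QA := (QA T). Local Notation QB := (QB T).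
Local Notation SA := (SA T). Local Notation SB := (SB T).

Definition conjunctive : Prop :=
  (forall q s g q', (q, s, g, q') \in deltaA T ->
      inl (initA T) \in g /\ inr (initB T) \in g) /\
  (forall q s g q', (q, s, g, q') \in deltaB T ->
      inl (initA T) \in g /\ inr (initB T) \in g).

(* (A,B)^(1,n): process None = A, process Some i = B_(i+1) *)
Definition proc (n : nat) := option 'I_n.
Definition gstate (n : nat) := (QA * {ffun 'I_n -> QB})%type.
Definition ginput (n : nat) := (SA * {ffun 'I_n -> SB})%type.

Definition loc n (s : gstate n) (p : proc n) : QA + QB :=
  match p with None => inl s.1 | Some i => inr (s.2 i) end.
Definition linp n (e : ginput n) (p : proc n) : SA + SB :=
  match p with None => inl e.1 | Some i => inr (e.2 i) end.
Definition linit n (p : proc n) : QA + QB :=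
  match p with None => inl (initA T) | Some _ => inr (initB T) end.

Definition init_state n : gstate n := (initA T, [ffun => initB T]).

Definition guard_sat n (s : gstate n) (p : proc n) (g : {set (QA + QB)}) : Prop :=
  forall p', p' <> p -> loc s p' \in g.

Definition step n (s : gstate n) (e : ginput n) (p : proc n) (s' : gstate n) : Prop :=
  match p with
  | None => exists q sg g q', (q, sg, g, q') \in deltaA T /\ s.1 = q /\ e.1 = sg
              /\ guard_sat s None g /\ s' = (q', s.2)
  | Some i => exists q sg g q', (q, sg, g, q') \in deltaB T /\ s.2 i = q /\ e.2 i = sg
              /\ guard_sat s (Some i) g
              /\ s' = (s.1, [ffun j => if j == i then q' else s.2 j])
  end.

(* An infinite run: the sequence of configurations (s_t, e_t, p_t), t = 0,1,...
   (no bottom configuration occurs in an infinite run). *)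
Record inf_run (n : nat) := InfRun {
  rs : nat -> gstate n;
  re : nat -> ginput n;
  rp : nat -> proc n }.

Definition is_inf_run n (r : inf_run n) : Prop :=
  rs r 0 = init_state n /\
  (forall t, step (rs r t) (re r t) (rp r t) (rs r t.+1)) /\
  (forall t p, p <> rp r t -> linp (re r t.+1) p = linp (re r t) p).

Definition moves_inf_often n (r : inf_run n) (p : proc n) : Prop :=
  forall t, exists t', t <= t' /\ rp r t' = p.

Definition uncond_fair n (r : inf_run n) : Prop :=
  is_inf_run r /\ forall p, moves_inf_often r p.

Definition initializing n (r : inf_run n) : Prop :=
  forall p, moves_inf_often r p ->
    forall t, exists t', t <= t' /\ loc (rs r t') p = linit p.

Inductive atom := AtQA of QA | AtSA of SA | AtQB1 of QB | AtSB1 of SB.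

Inductive ltl :=
  | LTrue
  | LAtom of atom
  | LNot of ltl
  | LAnd of ltl & ltl
  | LUntil of ltl & ltl.

Definition obs := (QA * SA * QB * SB)%type.

Definition atom_holds (o : obs) (a : atom) : Prop :=
  match a with
  | AtQA q => o.1.1.1 = q
  | AtSA x => o.1.1.2 = x
  | AtQB1 q => o.1.2 = q
  | AtSB1 x => o.2 = x
  end.

Fixpoint ltl_sat (w : nat -> obs) (t : nat) (f : ltl) : Prop :=
  match f with
  | LTrue => True
  | LAtom a => atom_holds (w t) a
  | LNot f1 => ~ ltl_sat w t f1
  | LAnd f1 f2 => ltl_sat w t f1 /\ ltl_sat w t f2
  | LUntil f1 f2 => exists k, t <= k /\ ltl_sat w k f2 /\
                      forall j, t <= j < k -> ltl_sat w j f1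
  end.

Definition run_obs n (r : inf_run n) (i : 'I_n) : nat -> obs :=
  fun t => ((rs r t).1, (re r t).1, (rs r t).2 i, (re r t).2 i).

(* the run satisfies h(A,B_1); B_1 is the B-process with index 0 *)
Definition run_sat n (r : inf_run n) (h : ltl) : Prop :=
  forall i : 'I_n, nat_of_ord i = 0 -> ltl_sat (run_obs r i) 0 h.

End Sys.

From mathcomp Require Import all_boot.
From Stdlib Require Import Setoid.
Set Implicit Arguments. Unset Strict Implicit. Unset Printing Implicit Defensive.

(* Split a process B_i other than B_1 into two copies that take turns: at every
   moment one copy carries the local state of B_i and the other waits in init_B,
   which belongs to every conjunctive guard and so never disables anybody.
   Whenever B_i leaves init_B both copies are in init_B, and the move is handed
   to the waiting copy, which takes over.  In a fair initializing run B_i leaves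
   init_B infinitely often, so the roles swap infinitely often in both
   directions and both copies move and revisit init_B infinitely often; A and
   B_1 behave exactly as before, so h(A,B_1) is preserved. *)

Section NextOccurrence.
Variable P : pred nat.
Hypothesis P_inf : forall t, exists u, t <= u /\ P u.

Lemma ex_occ_after t : exists u, (t <= u) && P u.
Proof. by have [u [tu Pu]] := P_inf t; exists u; rewrite tu Pu. Qed.

Definition next_occ t : nat := ex_minn (ex_occ_after t).

Lemma next_occ_spec t : t <= next_occ t /\ P (next_occ t).
Proof. by rewrite /next_occ; case: ex_minnP => u /andP[]. Qed.

Lemma next_occ_min t u : t <= u -> P u -> next_occ t <= u.
Proof. by move=> tu Pu; rewrite /next_occ; case: ex_minnP => v _; apply; rewrite tu. Qed.

Lemma next_occ_gap t u : t <= u < next_occ t -> ~~ P u.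
Proof.
by case/andP=> tu ltu; apply/negP => /(next_occ_min tu); rewrite leqNgt ltu.
Qed.

Lemma next_occ_id t : P t -> next_occ t = t.
Proof.
by move=> Pt; apply/eqP; rewrite eqn_leq next_occ_min // (next_occ_spec t).1.
Qed.

Lemma next_occS t : ~~ P t -> next_occ t.+1 = next_occ t.
Proof.
move=> nPt; have [tn Pn] := next_occ_spec t; have [tn' Pn'] := next_occ_spec t.+1.
apply/eqP; rewrite eqn_leq next_occ_min ?(next_occ_min (ltnW tn')) //.
by rewrite ltn_neqAle tn andbT; apply: contraNneq nPt => ->.
Qed.

End NextOccurrence.

Section Parity.
Variable c : pred nat.

Fixpoint parity t := if t is u.+1 then parity u (+) c u else false.

Lemma parity_gap a b :
  a <= b -> (forall u, a <= u < b -> ~~ c u) -> parity b = parity a.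
Proof.
elim: b => [|b IH] ab gap; first by move: ab; rewrite leqn0 => /eqP ->.
case: (eqVneq a b.+1) => [-> // | nab].
have ab' : a <= b by rewrite -ltnS ltn_neqAle nab.
have cb : ~~ c b by apply: gap; rewrite ab' /=.
rewrite /= (negbTE cb) addbF IH // => u /andP[au ub].
by apply: gap; rewrite au ltnW.
Qed.

Hypothesis c_inf : forall t, exists u, t <= u /\ c u.

Lemma parity_flips b t : exists u, t <= u /\ c u /\ parity u.+1 = b.
Proof.
have [tu1 cu1] := next_occ_spec c_inf t; set u1 := next_occ c_inf t in tu1 cu1 *.
have [<-|nb] := eqVneq (parity u1.+1) b; first by exists u1.
have [u1u2 cu2] := next_occ_spec c_inf u1.+1.
set u2 := next_occ c_inf u1.+1 in u1u2 cu2 *.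
exists u2; split; first exact: leq_trans tu1 (ltnW u1u2).
split=> //=; rewrite cu2 addbT (parity_gap u1u2); last exact: next_occ_gap.
by move: nb; case: b; case: (parity _).
Qed.

End Parity.

Section RunFrame.
Variables (T : templates) (n : nat).

Lemma step_loc_other (s s' : gstate T n) e p p' :
  step s e p s' -> p' <> p -> loc s' p' = loc s p'.
Proof.
case: p => [i|] /= [q [sg [g [q' [_ [_ [_ [_ ->]]]]]]]]; case: p' => [j|] //= neq.
by rewrite ffunE; case: eqP => // ji; case: neq; rewrite ji.
Qed.

Variable r : inf_run T n.
Hypothesis hrun : is_inf_run r.

Lemma run_loc_frame p a b :
  a <= b -> (forall u, a <= u < b -> p <> rp r u) -> loc (rs r b) p = loc (rs r a) p.
Proof.
elim: b => [|b IH] ab frame; first by move: ab; rewrite leqn0 => /eqP ->.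
case: (eqVneq a b.+1) => [-> // | nab].
have ab' : a <= b by rewrite -ltnS ltn_neqAle nab.
rewrite (step_loc_other (hrun.2.1 b)); last by apply: frame; rewrite ab' /=.
by apply: IH => // u /andP[au ub]; apply: frame; rewrite au ltnW.
Qed.

Lemma moves_from_init p :
  moves_inf_often r p -> initializing r ->
  forall t, exists u, t <= u /\ rp r u = p /\ loc (rs r u) p = linit T p.
Proof.
move=> pinf rinit t; have [t1 [tt1 init1]] := rinit p pinf t.
have moves : forall t, exists u, t <= u /\ rp r u == p.
  by move=> t'; have [u [t'u /eqP]] := pinf t'; exists u.
have [t1u /eqP ru] := next_occ_spec moves t1.
exists (next_occ moves t1); split; first exact: leq_trans tt1 t1u.
split=> //; rewrite (run_loc_frame t1u) // => u /next_occ_gap /eqP nu pu.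
exact: nu (esym pu).
Qed.

End RunFrame.

Section Copies.
Variables (n : nat) (i0 : 'I_n).

Definition copy (b : bool) : 'I_n.+1 := if b then ord_max else lift ord_max i0.
Definition orig (k : 'I_n.+1) : 'I_n := odflt i0 (unlift ord_max k).
Definition embed (o : bool) (j : 'I_n) : 'I_n.+1 :=
  if j == i0 then copy o else lift ord_max j.
Definition unembed (o : bool) (k : 'I_n.+1) : option 'I_n :=
  if k == copy (~~ o) then None else Some (orig k).

Lemma orig_lift j : orig (lift ord_max j) = j.
Proof. by rewrite /orig liftK. Qed.

Lemma orig_copy b : orig (copy b) = i0.
Proof. by case: b; rewrite /orig ?unlift_none ?liftK. Qed.

Lemma orig_embed o j : orig (embed o j) = j.
Proof. by rewrite /embed; case: eqP => [->|_]; rewrite ?orig_copy ?orig_lift. Qed.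

Lemma eq_copy b b' : (copy b == copy b') = (b == b').
Proof.
have ne := negbTE (neq_lift ord_max i0).
by case: b; case: b'; rewrite /= ?eqxx ?ne // eq_sym ne.
Qed.

Lemma lift_neq_copy j b : j != i0 -> (lift ord_max j == copy b) = false.
Proof.
move=> nj; apply/negbTE; case: b; first by rewrite eq_sym neq_lift.
by rewrite (inj_eq (@lift_inj _ ord_max)).
Qed.

Lemma copy_or_lift k :
  (exists b, k = copy b) \/ exists2 j, j != i0 & k = lift ord_max j.
Proof.
case: (unliftP ord_max k) => [j ->|->]; last by left; exists true.
by case: (eqVneq j i0) => [->|nj]; [left; exists false | right; exists j].
Qed.

Lemma embedK o : pcancel (embed o) (unembed o).
Proof.
move=> j; rewrite /unembed orig_embed /embed.
case: (eqVneq j i0) => [->|nj]; last by rewrite lift_neq_copy.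
by rewrite eq_copy; case: o.
Qed.

Lemma unembedK o : ocancel (unembed o) (embed o).
Proof.
move=> k; rewrite /unembed; case: eqP => //= nk.
have [[b kb]|[j nj ->]] := copy_or_lift k; last by rewrite orig_lift /embed (negbTE nj).
by rewrite {}kb orig_copy /embed eqxx in nk *; move: nk; case: o; case: b.
Qed.

End Copies.

Section Park.
Variables (T : templates) (m n : nat).
Variables (src : 'I_m -> option 'I_n) (dst : 'I_n -> 'I_m).
Hypotheses (dstK : pcancel dst src) (srcK : ocancel src dst).

Definition park (s : gstate T n) : gstate T m :=
  (s.1, [ffun k => if src k is Some j then s.2 j else initB T]).

Lemma park_init : park (init_state T n) = init_state T m.
Proof.
by congr pair; apply/ffunP => k; rewrite !ffunE; case: (src k) => [j|]; rewrite ?ffunE.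
Qed.

Lemma src_dst k j : (src k == Some j) = (dst j == k).
Proof.
by apply/eqP/eqP => [e|<-]; [have := srcK k; rewrite e | exact: dstK].
Qed.

Lemma park_guard (s : gstate T n) p (g : {set QA T + QB T}) :
  inr (initB T) \in g -> guard_sat s p g -> guard_sat (park s) (omap dst p) g.
Proof.
move=> g_init sat [k|] neq /=; last by apply: (sat None) => e; apply: neq; rewrite -e.
rewrite ffunE; case e: (src k) => [j|] //; apply: (sat (Some j)) => jp; apply: neq.
by rewrite -jp; move: (srcK k); rewrite e /= => ->.
Qed.

Lemma park_update (s : gstate T n) i q :
  park (s.1, [ffun j => if j == i then q else s.2 j]) =
  (s.1, [ffun k => if k == dst i then q else (park s).2 k]).
Proof.
congr pair; apply/ffunP => k; rewrite !ffunE.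
case e: (src k) => [j|]; first by rewrite ffunE [k == _]eq_sym -src_dst e.
by case: eqP => // kd; move: e; rewrite kd dstK.
Qed.

Lemma park_step (hconj : conjunctive T) (s s' : gstate T n) e p e' :
  step s e p s' -> linp e' (omap dst p) = linp e p ->
  step (park s) e' (omap dst p) (park s').
Proof.
case: p => [i|] [q [sg [g [q' [tr [sq [esg [sat ->]]]]]]]] [ein];
  exists q, sg, g, q'; split=> //.
- split; first by rewrite ffunE dstK.
  split; first by rewrite ein.
  by split; [exact: park_guard (hconj.2 _ _ _ _ tr).2 sat | exact: park_update].
- split=> //; split; first by rewrite ein.
  by split=> //; exact: park_guard (hconj.1 _ _ _ _ tr).2 sat.
Qed.

End Park.

Section Splitting.
Variables (T : templates) (n : nat) (r : inf_run T n) (i0 : 'I_n).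
Hypotheses (hrun : is_inf_run r) (hfair : forall p, moves_inf_often r p).
Hypothesis hinit : initializing r.

Lemma park_unembed_copy o b (s : gstate T n) :
  (park (unembed i0 o) s).2 (copy i0 b) = if b == o then s.2 i0 else initB T.
Proof. by rewrite ffunE /unembed eq_copy orig_copy; case: b; case: o. Qed.

Lemma park_unembed_lift o j (s : gstate T n) :
  j != i0 -> (park (unembed i0 o) s).2 (lift ord_max j) = s.2 j.
Proof. by move=> nj; rewrite ffunE /unembed lift_neq_copy // orig_lift. Qed.

Lemma park_unembed_idle o o' (s : gstate T n) :
  s.2 i0 = initB T -> park (unembed i0 o) s = park (unembed i0 o') s.
Proof.
move=> idle; congr pair; apply/ffunP => k.
have [[b ->]|[j nj ->]] := copy_or_lift i0 k; last by rewrite !park_unembed_lift.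
by rewrite !park_unembed_copy idle !if_same.
Qed.

Definition leaves_init t : bool :=
  (rp r t == Some i0) && ((rs r t).2 i0 == initB T).

Local Notation owner := (parity leaves_init).

Definition split_state t : gstate T n.+1 := park (unembed i0 (owner t)) (rs r t).
Definition split_proc t : proc n.+1 := omap (embed i0 (owner t.+1)) (rp r t).

Lemma split_state_owner_next t :
  split_state t = park (unembed i0 (owner t.+1)) (rs r t).
Proof.
rewrite /split_state /=; case L: (leaves_init t); rewrite ?addbF ?addbT //.
by apply: park_unembed_idle; case/andP: L => _ /eqP.
Qed.

Lemma leaves_init_inf t : exists u, t <= u /\ leaves_init u.
Proof.
have [u [tu [ru lu]]] := moves_from_init hrun (hfair (Some i0)) hinit t.
by exists u; split=> //; rewrite /leaves_init ru; case: lu => ->; rewrite !eqxx.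
Qed.

Lemma split_fair p t : exists u, t <= u /\ split_proc u = p.
Proof.
case: p => [k|]; last by have [u [tu ru]] := hfair None t; exists u; rewrite /split_proc ru.
have [[b ->]|[j nj ->]] := copy_or_lift i0 k.
- have [u [tu [/andP[/eqP ru _] ou]]] := parity_flips leaves_init_inf b t.
  by exists u; rewrite /split_proc ru ou /= /embed eqxx.
- have [u [tu ru]] := hfair (Some j) t.
  by exists u; rewrite /split_proc ru /= /embed (negbTE nj).
Qed.

Lemma split_moves k t : exists u, t <= u /\ split_proc u == Some k.
Proof. by have [u [tu /eqP]] := split_fair (Some k) t; exists u. Qed.

(* A waiting copy already reads the input it will consume at its next move. *)
Definition split_input t : ginput T n.+1 :=
  ((re r t).1, [ffun k =>
     (re r (if orig i0 k == i0 then next_occ (split_moves k) t else t)).2 (orig i0 k)]).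

Definition split_run : inf_run T n.+1 := InfRun split_state split_input split_proc.

Lemma split_input_mover t k :
  split_proc t = Some k -> (split_input t).2 k = (re r t).2 (orig i0 k).
Proof. by move=> mv; rewrite ffunE next_occ_id ?if_same //= mv. Qed.

Lemma split_input_frame t p :
  p <> split_proc t -> linp (split_input t.+1) p = linp (split_input t) p.
Proof.
have frame := hrun.2.2 t.
case: p => [k|] nmv; last by apply: (frame None) => rN; apply: nmv; rewrite /split_proc -rN.
congr inr; rewrite !ffunE.
have [[b kb]|[j nj kj]] := copy_or_lift i0 k; subst k.
- rewrite orig_copy eqxx next_occS //=; apply/eqP => mv; exact: nmv (esym mv).
- rewrite orig_lift (negbTE nj).
  have nrj : Some j <> rp r t.
    by move=> rj; apply: nmv; rewrite /split_proc -rj /= /embed (negbTE nj).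
  by case: (frame _ nrj) => ->.
Qed.

Lemma split_run_inf : conjunctive T -> is_inf_run split_run.
Proof.
move=> hconj; split; first by rewrite /= /split_state hrun.1 park_init.
split=> [t|]; last exact: split_input_frame.
rewrite /= split_state_owner_next.
apply: (park_step (embedK i0 _) (unembedK i0 _) hconj (hrun.2.1 t)) => /=.
rewrite /split_proc; case rt: (rp r t) => [j|] //=.
by rewrite split_input_mover ?orig_embed // /split_proc rt.
Qed.

Lemma split_init p t : exists u, t <= u /\ loc (split_state u) p = linit T p.
Proof.
case: p => [k|]; last by have [u [tu lu]] := hinit (hfair None) t; exists u.
have [[b ->]|[j nj ->]] := copy_or_lift i0 k.
- have [u [tu /andP[_ /eqP idle]]] := leaves_init_inf t.
  by exists u; rewrite /= park_unembed_copy idle if_same.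
- have [u [tu lu]] := hinit (hfair (Some j)) t.
  by exists u; rewrite /= park_unembed_lift //; case: lu => ->.
Qed.

Lemma split_obs j : j != i0 -> run_obs split_run (lift ord_max j) =1 run_obs r j.
Proof.
by move=> nj t; rewrite /run_obs /= park_unembed_lift // ffunE orig_lift (negbTE nj).
Qed.

End Splitting.

Lemma eq_ltl_sat (T : templates) (w1 w2 : nat -> obs T) :
  w1 =1 w2 -> forall f t, ltl_sat w1 t f <-> ltl_sat w2 t f.
Proof.
move=> eqw; elim=> [|a|f IH|f1 IH1 f2 IH2|f1 IH1 f2 IH2] t //=.
- by rewrite eqw.
- by rewrite IH.
- by rewrite IH1 IH2.
- by setoid_rewrite IH1; setoid_rewrite IH2.
Qed.

Theorem mainTheorem13 (T : templates) (hconj : conjunctive T) (h : ltl T) (n : nat) :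
  2 <= n ->
  (exists r : inf_run T n, uncond_fair r /\ initializing r /\ run_sat r h) ->
  (exists r : inf_run T n.+1, uncond_fair r /\ initializing r /\ run_sat r h).
Proof.
move=> n_ge2 [r [[hrun hfair] [hinit hsat]]].
pose i0 : 'I_n := Ordinal n_ge2.
exists (split_run i0 hrun hfair hinit); split; last split.
- by split; [exact: split_run_inf | move=> p t; exact: split_fair].
- by move=> p _ t; exact: split_init.
move=> k k0; case: (unliftP ord_max k) => [j kj|kmax]; last first.
  have : 1 < k by rewrite kmax.
  by rewrite k0.
have j0 : nat_of_ord j = 0 by rewrite -k0 kj lift_max.
have nj : j != i0 by rewrite -val_eqE /= j0.
by rewrite kj; apply/(eq_ltl_sat (split_obs hrun hfair hinit nj)); exact: hsat.
Qed.
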